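(* Consider the Fast PL-ADMM-PS algorithm. Assume that the linear map $\mathcal{A}(\mathbf{x}_1,\dots,\mathbf{x}_n)=\sum_{i=1}^n\mathcal{A}_i(\mathbf{x}_i)$ is onto, that the sequence $\{\mathbf{z}^k\}$ is bounded, and that $\partial h$ and $\nabla g$ are bounded on bounded sets (i.e. for every bounded set $B$, $\sup\{\|\mathbf{v}\|:\mathbf{v}\in\partial h(\mathbf{x}),\mathbf{x}\in B\}<\infty$ and $\sup_{\mathbf{x}\in B}\|\nabla g(\mathbf{x})\|<\infty$), where $g(\mathbf{x})=\sum_i g_i(\mathbf{x}_i)$ and $h(\mathbf{x})=\sum_i h_i(\mathbf{x}_i)$. Then the sequences $\{\mathbf{x}^k\}$, $\{\mathbf{y}^k\}$ and $\{\boldsymbol{\lambda}^k\}$ are bounded.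
   Context: Setting: finite-dimensional real inner product spaces with induced norms $\|\cdot\|$. Problem: $\min\sum_{i=1}^n f_i(\mathbf{x}_i)$, $f_i=g_i+h_i$, subject to $\mathcal{A}(\mathbf{x}):=\sum_{i=1}^n\mathcal{A}_i(\mathbf{x}_i)=\mathbf{b}$, where $\mathbf{x}=(\mathbf{x}_1,\dots,\mathbf{x}_n)$, each $g_i,h_i$ is proper convex lower semicontinuous, $g_i$ is differentiable with $L_i$-Lipschitz gradient ($L_i>0$), each $\mathcal{A}_i$ is a nonzero linear map (adjoint $\mathcal{A}_i^T$, operator norm $\|\mathcal{A}_i\|$) into a common space. Fast PL-ADMM-PS: fix $\beta>0$ and $\eta_i>n\|\mathcal{A}_i\|^2$; given $\mathbf{x}^0,\mathbf{z}^0,\boldsymbol{\lambda}^0$ and $\theta^{(0)}=1$, for $k=0,1,2,\dots$, for each $i=1,\dots,n$ (in parallel): $\mathbf{y}_i^{k+1}=(1-\theta^{(k)})\mathbf{x}_i^k+\theta^{(k)}\mathbf{z}_i^k$; $\mathbf{z}_i^{k+1}=\arg\min_{\mathbf{x}_i}\ \langle\nabla g_i(\mathbf{y}_i^{k+1}),\mathbf{x}_i\rangle+h_i(\mathbf{x}_i)+\langle\boldsymbol{\lambda}^k,\mathcal{A}_i(\mathbf{x}_i)\rangle+\langle\beta\mathcal{A}_i^T(\mathcal{A}(\mathbf{z}^k)-\mathbf{b}),\mathbf{x}_i\rangle+\frac{L_i\theta^{(k)}+\beta\eta_i}{2}\|\mathbf{x}_i-\mathbf{z}_i^k\|^2$;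 $\mathbf{x}_i^{k+1}=(1-\theta^{(k)})\mathbf{x}_i^k+\theta^{(k)}\mathbf{z}_i^{k+1}$; then $\boldsymbol{\lambda}^{k+1}=\boldsymbol{\lambda}^k+\beta(\mathcal{A}(\mathbf{z}^{k+1})-\mathbf{b})$ and $\theta^{(k+1)}=\frac{-(\theta^{(k)})^2+\sqrt{(\theta^{(k)})^4+4(\theta^{(k)})^2}}{2}$. *)

From Stdlib Require Import Reals Lra.
Open Scope R_scope.

Fixpoint rsum (f : nat -> R) (n : nat) : R :=
  match n with O => 0 | S k => rsum f k + f k end.

Definition vec (d : nat) : Type :=
  {v : nat -> R | forall j, (d <= j)%nat -> v j = 0}.

Definition vval {d : nat} (u : vec d) : nat -> R := proj1_sig u.

Definition vzero (d : nat) : vec d := exist _ (fun _ => 0) (fun _ _ => eq_refl).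

Definition vadd {d : nat} (u v : vec d) : vec d.
Proof.
  refine (exist _ (fun j => vval u j + vval v j) _).
  intros j Hj; unfold vval; rewrite (proj2_sig u j Hj), (proj2_sig v j Hj); ring.
Defined.

Definition vscale {d : nat} (c : R) (u : vec d) : vec d.
Proof.
  refine (exist _ (fun j => c * vval u j) _).
  intros j Hj; unfold vval; rewrite (proj2_sig u j Hj); ring.
Defined.

Definition vsub {d : nat} (u v : vec d) : vec d := vadd u (vscale (-1) v).

Definition inner {d : nat} (u v : vec d) : R := rsum (fun j => vval u j * vval v j) d.
Definition norm {d : nat} (u : vec d) : R := sqrt (inner u u).

(** Extended reals (-oo excluded): values of proper functions. *)
Inductive ERbar : Type := fin : R -> ERbar | pinf : ERbar.

Definition ext_le (a b : ERbar) : Prop :=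
  match a, b with
  | _, pinf => True
  | pinf, fin _ => False
  | fin x, fin y => x <= y
  end.

Definition ext_add (a b : ERbar) : ERbar :=
  match a, b with fin x, fin y => fin (x + y) | _, _ => pinf end.

Definition real_lt_ext (r : R) (a : ERbar) : Prop :=
  match a with fin x => r < x | pinf => True end.

Definition proper {d : nat} (h : vec d -> ERbar) : Prop := exists x, h x <> pinf.

Definition convex_ext {d : nat} (h : vec d -> ERbar) : Prop :=
  forall x y a b t, 0 <= t <= 1 -> h x = fin a -> h y = fin b ->
    exists c, h (vadd (vscale t x) (vscale (1 - t) y)) = fin c /\
              c <= t * a + (1 - t) * b.

Definition lsc {d : nat} (h : vec d -> ERbar) : Prop :=
  forall x r, real_lt_ext r (h x) ->
    exists delta, 0 < delta /\
      forall y, norm (vsub y x) < delta -> real_lt_ext r (h y).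

Definition convex {d : nat} (g : vec d -> R) : Prop :=
  forall x y t, 0 <= t <= 1 ->
    g (vadd (vscale t x) (vscale (1 - t) y)) <= t * g x + (1 - t) * g y.

Definition is_gradient {d : nat} (g : vec d -> R) (dg : vec d -> vec d) : Prop :=
  forall x eps, 0 < eps -> exists delta, 0 < delta /\
    forall y, norm (vsub y x) < delta ->
      Rabs (g y - g x - inner (dg x) (vsub y x)) <= eps * norm (vsub y x).

Definition lipschitz {d1 d2 : nat} (f : vec d1 -> vec d2) (L : R) : Prop :=
  forall x y, norm (vsub (f x) (f y)) <= L * norm (vsub x y).

Definition linear_map {d1 d2 : nat} (A : vec d1 -> vec d2) : Prop :=
  (forall u v, A (vadd u v) = vadd (A u) (A v)) /\
  (forall c u, A (vscale c u) = vscale c (A u)).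

Definition is_adjoint {d1 d2 : nat} (A : vec d1 -> vec d2) (AT : vec d2 -> vec d1) : Prop :=
  forall x y, inner (A x) y = inner x (AT y).

Definition is_opnorm {d1 d2 : nat} (A : vec d1 -> vec d2) (nA : R) : Prop :=
  is_lub (fun r => exists x, norm x <= 1 /\ r = norm (A x)) nA.

(** Product space R^{d 0} x ... x R^{d (n-1)}: blocks indexed by i < n
    (blocks with index >= n are irrelevant). *)
Definition pvec (d : nat -> nat) : Type := forall i : nat, vec (d i).

Definition pinner (n : nat) (d : nat -> nat) (x y : pvec d) : R :=
  rsum (fun i => inner (x i) (y i)) n.
Definition pnorm (n : nat) (d : nat -> nat) (x : pvec d) : R := sqrt (pinner n d x x).
Definition psub (d : nat -> nat) (x y : pvec d) : pvec d := fun i => vsub (x i) (y i).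

Fixpoint Asum (m : nat) (d : nat -> nat) (A : forall i, vec (d i) -> vec m)
  (x : pvec d) (k : nat) : vec m :=
  match k with
  | O => vzero m
  | S k' => vadd (Asum m d A x k') (A k' (x k'))
  end.
Definition Amap (n m : nat) (d : nat -> nat) (A : forall i, vec (d i) -> vec m)
  (x : pvec d) : vec m := Asum m d A x n.

Fixpoint hsum_aux (d : nat -> nat) (h : forall i, vec (d i) -> ERbar) (x : pvec d)
  (k : nat) : ERbar :=
  match k with
  | O => fin 0
  | S k' => ext_add (hsum_aux d h x k') (h k' (x k'))
  end.
Definition hsum (n : nat) (d : nat -> nat) (h : forall i, vec (d i) -> ERbar)
  (x : pvec d) : ERbar := hsum_aux d h x n.

Definition subgrad_h (n : nat) (d : nat -> nat) (h : forall i, vec (d i) -> ERbar)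
  (x v : pvec d) : Prop :=
  exists hx, hsum n d h x = fin hx /\
    forall y, ext_le (fin (hx + pinner n d v (psub d y x))) (hsum n d h y).

Definition grad_g (d : nat -> nat) (dg : forall i, vec (d i) -> vec (d i))
  (x : pvec d) : pvec d := fun i => dg i (x i).

Definition pbounded_set (n : nat) (d : nat -> nat) (B : pvec d -> Prop) : Prop :=
  exists M, forall x, B x -> pnorm n d x <= M.

From Stdlib Require Import Reals Lra Lia.
Open Scope R_scope.

(** The averaging steps keep [x^k] and [y^k] bounded: since [theta_k] lies in
    [[0, 1]], convexity of the squared norm gives
    [|x^{k+1}|^2 <= (1 - theta_k) |x^k|^2 + theta_k |z^{k+1}|^2].
    For the multipliers, the optimality condition of the [z]-subproblem says
    that [-(grad g(y^{k+1}) + A^T lam^k + beta A^T (A z^k - b)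
           + (L_i theta_k + beta eta_i) (z^{k+1} - z^k))]
    is a subgradient of [h] at [z^{k+1}], so [A^T lam^k] is a sum of bounded
    terms. As [A] is onto, every [<lam^k, c>] can be written [<A^T lam^k, u>]
    for a fixed [u] with [A u = c], hence [lam^k] is bounded. *)

Lemma rsum_ext f g N : (forall l, (l < N)%nat -> f l = g l) -> rsum f N = rsum g N.
Proof.
  induction N as [|N IH]; simpl; intros H; auto.
  rewrite IH, H by (intros; try apply H; lia). reflexivity.
Qed.

Lemma rsum_plus f g N : rsum (fun l => f l + g l) N = rsum f N + rsum g N.
Proof. induction N; simpl; [ring | rewrite IHN; ring]. Qed.

Lemma rsum_scal c f N : rsum (fun l => c * f l) N = c * rsum f N.
Proof. induction N; simpl; [ring | rewrite IHN; ring]. Qed.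

Lemma rsum_zero N : rsum (fun _ => 0) N = 0.
Proof. induction N; simpl; [ring | rewrite IHN; ring]. Qed.

Lemma rsum_le f g N : (forall l, (l < N)%nat -> f l <= g l) -> rsum f N <= rsum g N.
Proof.
  induction N as [|N IH]; simpl; intros H; [lra|].
  assert (f N <= g N) by (apply H; lia).
  assert (rsum f N <= rsum g N) by (apply IH; intros; apply H; lia). lra.
Qed.

Lemma rsum_nonneg f N : (forall l, (l < N)%nat -> 0 <= f l) -> 0 <= rsum f N.
Proof. intros H. rewrite <- (rsum_zero N). apply rsum_le, H. Qed.

Lemma rsum_term_le f N j :
  (forall l, (l < N)%nat -> 0 <= f l) -> (j < N)%nat -> f j <= rsum f N.
Proof.
  induction N as [|N IH]; intros H Hj; simpl; [lia|].
  destruct (Nat.eq_dec j N) as [->|Hne].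
  - assert (0 <= rsum f N) by (apply rsum_nonneg; intros; apply H; lia). lra.
  - assert (f j <= rsum f N) by (apply IH; [intros; apply H|]; lia).
    assert (0 <= f N) by (apply H; lia). lra.
Qed.

Lemma rsum_single f N j :
  (forall l, l <> j -> f l = 0) -> (j < N)%nat -> rsum f N = f j.
Proof.
  induction N as [|N IH]; intros H Hj; [lia|]. simpl.
  destruct (Nat.eq_dec j N) as [->|Hne].
  - rewrite (rsum_ext f (fun _ => 0)), rsum_zero by (intros; apply H; lia). ring.
  - rewrite (H N), IH by (auto; lia). ring.
Qed.

Lemma vval_add {D} (u v : vec D) j : vval (vadd u v) j = vval u j + vval v j.
Proof. reflexivity. Qed.

Lemma vval_scale {D} c (u : vec D) j : vval (vscale c u) j = c * vval u j.
Proof. reflexivity. Qed.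

Lemma vval_sub {D} (u v : vec D) j : vval (vsub u v) j = vval u j - vval v j.
Proof. unfold vsub. rewrite vval_add, vval_scale. ring. Qed.

Ltac vval_simpl := cbv beta; rewrite ?vval_sub, ?vval_add, ?vval_scale.

Lemma inner_add_l {D} (u v w : vec D) : inner (vadd u v) w = inner u w + inner v w.
Proof. unfold inner. rewrite <- rsum_plus. apply rsum_ext; intros; vval_simpl; ring. Qed.

Lemma inner_add_r {D} (u v w : vec D) : inner w (vadd u v) = inner w u + inner w v.
Proof. unfold inner. rewrite <- rsum_plus. apply rsum_ext; intros; vval_simpl; ring. Qed.

Lemma inner_scal_l {D} c (u w : vec D) : inner (vscale c u) w = c * inner u w.
Proof. unfold inner. rewrite <- rsum_scal. apply rsum_ext; intros; vval_simpl; ring. Qed.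

Lemma inner_scal_r {D} c (u w : vec D) : inner w (vscale c u) = c * inner w u.
Proof. unfold inner. rewrite <- rsum_scal. apply rsum_ext; intros; vval_simpl; ring. Qed.

Lemma inner_sub_l {D} (u v w : vec D) : inner (vsub u v) w = inner u w - inner v w.
Proof. unfold vsub. rewrite inner_add_l, inner_scal_l. ring. Qed.

Lemma inner_sub_r {D} (u v w : vec D) : inner w (vsub u v) = inner w u - inner w v.
Proof. unfold vsub. rewrite inner_add_r, inner_scal_r. ring. Qed.

Lemma inner_comm {D} (u v : vec D) : inner u v = inner v u.
Proof. unfold inner. apply rsum_ext; intros; ring. Qed.

Lemma inner_zero_r {D} (u : vec D) : inner u (vzero D) = 0.
Proof. unfold inner. rewrite <- (rsum_zero D). apply rsum_ext; intros; simpl; ring. Qed.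

Lemma inner_nonneg {D} (u : vec D) : 0 <= inner u u.
Proof. apply rsum_nonneg; intros; apply Rle_0_sqr. Qed.

Lemma norm_sq {D} (u : vec D) : norm u ^ 2 = inner u u.
Proof. apply pow2_sqrt, inner_nonneg. Qed.

Lemma Rabs_inner_le {D} (u v : vec D) :
  Rabs (inner u v) <= (inner u u + inner v v) / 2.
Proof.
  unfold inner. apply Rabs_le.
  replace ((_ + _) / 2) with
    (rsum (fun l => / 2 * (vval u l * vval u l + vval v l * vval v l)) D)
    by (rewrite rsum_scal, rsum_plus; field).
  split.
  - enough (0 <= rsum (fun l => vval u l * vval v l
                   + / 2 * (vval u l * vval u l + vval v l * vval v l)) D)
      by (rewrite rsum_plus in *; lra).
    apply rsum_nonneg; intros.
    pose proof (Rle_0_sqr (vval u l + vval v l)). unfold Rsqr in *. nra.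
  - apply rsum_le; intros.
    pose proof (Rle_0_sqr (vval u l - vval v l)). unfold Rsqr in *. nra.
Qed.

Lemma pinner_nonneg n d (a : pvec d) : 0 <= pinner n d a a.
Proof. apply rsum_nonneg; intros; apply inner_nonneg. Qed.

Lemma pinner_convex_comb n d (X Y Z : pvec d) t : 0 <= t <= 1 ->
  (forall i, (i < n)%nat -> X i = vadd (vscale (1 - t) (Y i)) (vscale t (Z i))) ->
  pinner n d X X <= (1 - t) * pinner n d Y Y + t * pinner n d Z Z.
Proof.
  intros Ht HX. unfold pinner. rewrite <- !rsum_scal, <- rsum_plus.
  apply rsum_le; intros i Hi. rewrite HX by exact Hi.
  unfold inner. rewrite <- !rsum_scal, <- rsum_plus. apply rsum_le; intros l _.
  vval_simpl. set (a := vval (Y i) l). set (c := vval (Z i) l).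
  assert (0 <= t * (1 - t) * ((a - c) * (a - c))).
  { apply Rmult_le_pos; [apply Rmult_le_pos; lra | apply Rle_0_sqr]. }
  nra.
Qed.

Definition bounded_seq (f : nat -> R) : Prop := exists K, forall k, Rabs (f k) <= K.

Lemma bounded_seq_ext f g : (forall k, f k = g k) -> bounded_seq g -> bounded_seq f.
Proof. intros E [K HK]. exists K. intro k. rewrite E. apply HK. Qed.

Lemma bounded_seq_const c : bounded_seq (fun _ => c).
Proof. exists (Rabs c). intros; apply Rle_refl. Qed.

Lemma bounded_seq_opp f : bounded_seq f -> bounded_seq (fun k => - f k).
Proof. intros [K HK]. exists K. intro k. rewrite Rabs_Ropp. apply HK. Qed.

Lemma bounded_seq_plus f g :
  bounded_seq f -> bounded_seq g -> bounded_seq (fun k => f k + g k).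
Proof.
  intros [Kf Hf] [Kg Hg]. exists (Kf + Kg). intro k.
  eapply Rle_trans; [apply Rabs_triang | apply Rplus_le_compat; auto].
Qed.

Lemma bounded_seq_minus f g :
  bounded_seq f -> bounded_seq g -> bounded_seq (fun k => f k - g k).
Proof. intros Hf Hg. apply bounded_seq_plus, bounded_seq_opp; assumption. Qed.

Lemma bounded_seq_mult f g :
  bounded_seq f -> bounded_seq g -> bounded_seq (fun k => f k * g k).
Proof.
  intros [Kf Hf] [Kg Hg]. exists (Kf * Kg). intro k. rewrite Rabs_mult.
  pose proof (Rabs_pos (f k)). pose proof (Rabs_pos (g k)).
  apply Rmult_le_compat; auto.
Qed.

Lemma bounded_seq_rsum (F : nat -> nat -> R) N :
  (forall j, (j < N)%nat -> bounded_seq (F j)) ->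
  bounded_seq (fun k => rsum (fun j => F j k) N).
Proof.
  induction N as [|N IH]; intros HF; simpl.
  - apply bounded_seq_const.
  - apply bounded_seq_plus; [apply IH; intros; apply HF | apply HF]; lia.
Qed.

Definition bounded_pseq n d (s : nat -> pvec d) : Prop :=
  exists K, forall k, pinner n d (s k) (s k) <= K.

Lemma bounded_pseq_pnorm n d (s : nat -> pvec d) :
  bounded_pseq n d s <-> exists M, forall k, pnorm n d (s k) <= M.
Proof.
  split; intros [K HK].
  - exists (sqrt K). intro k. apply sqrt_le_1_alt, HK.
  - exists (K ^ 2). intro k. specialize (HK k).
    pose proof (sqrt_pos (pinner n d (s k) (s k))).
    rewrite <- (pow2_sqrt _ (pinner_nonneg n d (s k))). unfold pnorm in HK. nra.
Qed.

Lemma bounded_pseq_shift n d (s : nat -> pvec d) :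
  bounded_pseq n d s -> bounded_pseq n d (fun k => s (S k)).
Proof. intros [K HK]. exists K. auto. Qed.

Lemma bounded_pseq_image n d (P : pvec d -> pvec d -> Prop) (s v : nat -> pvec d) :
  (forall B, pbounded_set n d B ->
     exists M, forall u w, B u -> P u w -> pnorm n d w <= M) ->
  bounded_pseq n d s -> (forall k, P (s k) (v k)) -> bounded_pseq n d v.
Proof.
  intros Hbdd Bs Hsv. apply bounded_pseq_pnorm.
  destruct (Hbdd (fun u => exists k, u = s k)) as [M HM].
  - apply bounded_pseq_pnorm in Bs. destruct Bs as [Ms HMs].
    exists Ms. intros u [k ->]. apply HMs.
  - exists M. intro k. apply (HM (s k)); eauto.
Qed.

Lemma bounded_pseq_block_inner n d (s : nat -> pvec d) i (w : vec (d i)) :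
  bounded_pseq n d s -> (i < n)%nat -> bounded_seq (fun k => inner (s k i) w).
Proof.
  intros [K HK] Hi. exists ((K + inner w w) / 2). intro k.
  eapply Rle_trans; [apply Rabs_inner_le|].
  assert (inner (s k i) (s k i) <= K).
  { eapply Rle_trans; [|apply HK].
    apply (rsum_term_le (fun l => inner (s k l) (s k l))); auto.
    intros; apply inner_nonneg. }
  lra.
Qed.

Lemma theta_in_unit (theta : nat -> R) : theta 0%nat = 1 ->
  (forall k, theta (S k) =
     (- (theta k) ^ 2 + sqrt ((theta k) ^ 4 + 4 * (theta k) ^ 2)) / 2) ->
  forall k, 0 <= theta k <= 1.
Proof.
  intros H0 HS k. induction k as [|k IH]; [rewrite H0; lra|]. rewrite HS.
  set (t := theta k) in *. set (s := sqrt (t ^ 4 + 4 * t ^ 2)).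
  assert (s * s = t ^ 4 + 4 * t ^ 2) by (apply sqrt_sqrt; nra).
  assert (0 <= s) by apply sqrt_pos.
  (* [s - t^2] and [s - t^2 - 2] have the signs of [4 t^2] and [-4]. *)
  assert ((s - t ^ 2) * (s + t ^ 2) = 4 * t ^ 2) by nra.
  assert ((s - t ^ 2 - 2) * (s + t ^ 2 + 2) = -4) by nra.
  split; nra.
Qed.

Section ConvexAveraging.
Variables (n : nat) (d : nat -> nat) (t : nat -> R).
Hypothesis t_unit : forall k, 0 <= t k <= 1.

Lemma bounded_pseq_convex_comb (s u v : nat -> pvec d) :
  bounded_pseq n d u -> bounded_pseq n d v ->
  (forall k i, (i < n)%nat ->
     s (S k) i = vadd (vscale (1 - t k) (u k i)) (vscale (t k) (v k i))) ->
  bounded_pseq n d s.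
Proof.
  intros [Ku Hu] [Kv Hv] Hs.
  exists (Rmax (pinner n d (s 0%nat) (s 0%nat)) (Rmax Ku Kv)). intros [|k].
  - apply Rmax_l.
  - pose proof (pinner_convex_comb n d _ _ _ _ (t_unit k) (Hs k)).
    pose proof (Hu k). pose proof (Hv k). pose proof (t_unit k).
    pose proof (Rmax_l Ku Kv). pose proof (Rmax_r Ku Kv).
    eapply Rle_trans; [|apply Rmax_r]. nra.
Qed.

Lemma bounded_pseq_convex_iterates (s w : nat -> pvec d) :
  bounded_pseq n d w ->
  (forall k i, (i < n)%nat ->
     s (S k) i = vadd (vscale (1 - t k) (s k i)) (vscale (t k) (w k i))) ->
  bounded_pseq n d s.
Proof.
  intros [Kw Hw] Hs. set (K := Rmax (pinner n d (s 0%nat) (s 0%nat)) Kw).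
  exists K. intro k. induction k as [|k IH]; [apply Rmax_l|].
  pose proof (pinner_convex_comb n d _ _ _ _ (t_unit k) (Hs k)).
  assert (Kw <= K) by apply Rmax_r.
  pose proof (Hw k). pose proof (t_unit k). nra.
Qed.

End ConvexAveraging.

Lemma le_of_le_plus_scaled X Y K : (forall t, 0 < t <= 1 -> X <= Y + t * K) -> X <= Y.
Proof.
  intros H. destruct (Rle_dec X Y) as [|Hn]; auto. exfalso.
  set (t := (X - Y) / (X - Y + Rabs K + 1)). pose proof (Rabs_pos K).
  assert (t * (X - Y + Rabs K + 1) = X - Y) by (unfold t; field; lra).
  assert (0 < t <= 1) as Ht.
  { split; [apply Rdiv_lt_0_compat; lra|].
    apply Rmult_le_reg_r with (X - Y + Rabs K + 1); lra. }
  specialize (H t Ht).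
  assert (t * K <= t * Rabs K) by (apply Rmult_le_compat_l; [lra | apply Rle_abs]).
  nra.
Qed.

(* First-order optimality of a proximal step: comparing [z] with [z + t (w - z)]
   and letting [t -> 0] leaves only the linear part of the quadratic. *)
Lemma prox_argmin_subgrad {D} (f : vec D -> ERbar) (a z z0 : vec D) (c : R) :
  convex_ext f -> proper f ->
  (forall w, ext_le (ext_add (f z) (fin (inner a z + c / 2 * norm (vsub z z0) ^ 2)))
                    (ext_add (f w) (fin (inner a w + c / 2 * norm (vsub w z0) ^ 2)))) ->
  exists fz, f z = fin fz /\ forall w,
    ext_le (fin (fz + inner (vscale (-1) (vadd a (vscale c (vsub z z0)))) (vsub w z)))
           (f w).
Proof.
  intros Hconv [w0 Hw0] Hmin.
  destruct (f z) as [fz|] eqn:Efz.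
  2:{ exfalso. specialize (Hmin w0). destruct (f w0); simpl in Hmin; auto. }
  exists fz; split; auto. intro w. destruct (f w) as [fw|] eqn:Efw; simpl; auto.
  set (P := inner (vsub z z0) (vsub w z)). set (Q := inner (vsub w z) (vsub w z)).
  rewrite inner_scal_l, inner_add_l, inner_scal_l, inner_sub_r. fold P.
  apply (le_of_le_plus_scaled _ _ (c * Q / 2)). intros t Ht.
  destruct (Hconv w z fw fz t ltac:(lra) Efw Efz) as [ft [Eft Hft]].
  set (wt := vadd (vscale t w) (vscale (1 - t) z)) in *.
  specialize (Hmin wt). rewrite Eft in Hmin. cbn [ext_add ext_le] in Hmin.
  assert (Ea : inner a wt = t * inner a w + (1 - t) * inner a z)
    by (unfold wt; rewrite inner_add_r, !inner_scal_r; ring).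
  assert (En : norm (vsub wt z0) ^ 2 = norm (vsub z z0) ^ 2 + 2 * t * P + t ^ 2 * Q).
  { rewrite !norm_sq. unfold P, Q, inner, wt. rewrite <- !rsum_scal, <- !rsum_plus.
    apply rsum_ext; intros; vval_simpl; ring. }
  rewrite Ea, En in Hmin.
  apply Rmult_le_reg_l with t; [lra | nra].
Qed.

Lemma subgrad_h_blocks n d (h : forall i, vec (d i) -> ERbar) (z v : pvec d) :
  (forall i, (i < n)%nat -> exists hz, h i (z i) = fin hz /\
     forall w, ext_le (fin (hz + inner (v i) (vsub w (z i)))) (h i w)) ->
  subgrad_h n d h z v.
Proof.
  intros Hblk. unfold subgrad_h, hsum, pinner.
  enough (forall k, (k <= n)%nat -> exists hk, hsum_aux d h z k = fin hk /\
    forall y, ext_le (fin (hk + rsum (fun i => inner (v i) (psub d y z i)) k))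
                     (hsum_aux d h y k)) by auto.
  induction k as [|k IH]; intros Hk.
  - exists 0; split; auto. intros y; simpl; lra.
  - destruct IH as [hk [Ek Hk']]; [lia|]. destruct (Hblk k ltac:(lia)) as [hz [Ez Hz]].
    exists (hk + hz). simpl. rewrite Ek, Ez. split; auto. intros y.
    specialize (Hk' y). specialize (Hz (y k)). unfold psub at 2.
    destruct (hsum_aux d h y k), (h k (y k)); simpl in *; auto. lra.
Qed.

Definition ebasis (m j : nat) : vec m.
Proof.
  refine (exist _ (fun l => if Nat.ltb l m then (if Nat.eqb l j then 1 else 0) else 0) _).
  intros l Hl. destruct (Nat.ltb_spec l m); [lia | reflexivity].
Defined.

Lemma inner_ebasis m (v : vec m) j : (j < m)%nat -> inner v (ebasis m j) = vval v j.
Proof.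
  intros Hj. unfold inner. rewrite (rsum_single _ _ j); auto.
  - simpl. destruct (Nat.ltb_spec j m); [|lia]. rewrite Nat.eqb_refl. ring.
  - intros l Hl. simpl. destruct (Nat.eqb_spec l j); [lia|].
    destruct (Nat.ltb l m); ring.
Qed.

Lemma bounded_vec_seq m (v : nat -> vec m) :
  (forall c, bounded_seq (fun k => inner (v k) c)) -> exists M, forall k, norm (v k) <= M.
Proof.
  intros Hc.
  assert (Hcoord : forall j, (j < m)%nat -> bounded_seq (fun k => vval (v k) j)).
  { intros j Hj. apply (bounded_seq_ext _ _ (fun k => eq_sym (inner_ebasis m (v k) j Hj))).
    apply Hc. }
  destruct (bounded_seq_rsum (fun j k => vval (v k) j * vval (v k) j) m) as [K HK].
  { intros j Hj. apply bounded_seq_mult; apply Hcoord, Hj. }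
  exists (sqrt K). intro k. apply sqrt_le_1_alt.
  eapply Rle_trans; [apply Rle_abs | apply HK].
Qed.

Lemma inner_Amap n m d (A : forall i, vec (d i) -> vec m) (u : pvec d) c :
  inner c (Amap n m d A u) = rsum (fun i => inner c (A i (u i))) n.
Proof.
  unfold Amap. induction n as [|k IH]; simpl; [apply inner_zero_r|].
  rewrite inner_add_r, IH. reflexivity.
Qed.

Section ZSubproblem.
Variables (n m : nat) (d : nat -> nat).
Variables (dg : forall i, vec (d i) -> vec (d i)) (h : forall i, vec (d i) -> ERbar).
Variables (L : nat -> R) (A : forall i, vec (d i) -> vec m) (AT : forall i, vec m -> vec (d i)).
Variables (b : vec m) (beta : R) (eta : nat -> R).
Variables (y z : nat -> pvec d) (lam : nat -> vec m) (theta : nat -> R).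

Hypothesis HAT : forall i, (i < n)%nat -> is_adjoint (A i) (AT i).
Hypothesis Hh_prop : forall i, (i < n)%nat -> proper (h i).
Hypothesis Hh_conv : forall i, (i < n)%nat -> convex_ext (h i).
Hypothesis Hz : forall k i, (i < n)%nat -> forall w : vec (d i),
  ext_le
    (ext_add (h i (z (S k) i))
       (fin (inner (dg i (y (S k) i)) (z (S k) i)
             + inner (lam k) (A i (z (S k) i))
             + inner (vscale beta (AT i (vsub (Amap n m d A (z k)) b))) (z (S k) i)
             + (L i * theta k + beta * eta i) / 2 * (norm (vsub (z (S k) i) (z k i))) ^ 2)))
    (ext_add (h i w)
       (fin (inner (dg i (y (S k) i)) w
             + inner (lam k) (A i w)
             + inner (vscale beta (AT i (vsub (Amap n m d A (z k)) b))) w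
             + (L i * theta k + beta * eta i) / 2 * (norm (vsub w (z k i))) ^ 2))).

Definition residual k : vec m := vsub (Amap n m d A (z k)) b.

Definition prox_weight k i : R := L i * theta k + beta * eta i.

Definition z_step_subgrad k : pvec d := fun i =>
  vscale (-1) (vadd (vadd (vadd (dg i (y (S k) i)) (AT i (lam k)))
                          (vscale beta (AT i (residual k))))
                    (vscale (prox_weight k i) (vsub (z (S k) i) (z k i)))).

Lemma z_step_subgrad_spec k : subgrad_h n d h (z (S k)) (z_step_subgrad k).
Proof.
  apply subgrad_h_blocks. intros i Hi.
  set (a := vadd (vadd (dg i (y (S k) i)) (AT i (lam k))) (vscale beta (AT i (residual k)))).
  apply (prox_argmin_subgrad (h i) a); auto. intro w.
  assert (Ea : forall w', inner (dg i (y (S k) i)) w' + inner (lam k) (A i w')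
      + inner (vscale beta (AT i (vsub (Amap n m d A (z k)) b))) w' = inner a w').
  { intro w'. unfold a, residual. rewrite !inner_add_l, !inner_scal_l.
    rewrite (inner_comm (lam k)), (HAT i Hi), (inner_comm w'). ring. }
  rewrite <- !Ea. apply Hz, Hi.
Qed.

Lemma inner_AT_lam k i (w : vec (d i)) :
  inner (AT i (lam k)) w =
  - (inner (z_step_subgrad k i) w + inner (dg i (y (S k) i)) w
     + beta * inner (AT i (residual k)) w
     + prox_weight k i * (inner (z (S k) i) w - inner (z k i) w)).
Proof. unfold z_step_subgrad. rewrite !inner_scal_l, !inner_add_l, !inner_scal_l, inner_sub_l. ring. Qed.

Lemma residual_inner_bounded c :
  bounded_pseq n d z -> bounded_seq (fun k => inner (residual k) c).
Proof.
  intros Bz. unfold residual.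
  apply (bounded_seq_ext _ (fun k => rsum (fun i => inner (z k i) (AT i c)) n - inner b c)).
  { intro k. rewrite inner_sub_l, inner_comm, inner_Amap. f_equal.
    apply rsum_ext. intros i Hi. rewrite inner_comm, (HAT i Hi). reflexivity. }
  apply bounded_seq_minus; [|apply bounded_seq_const].
  apply (bounded_seq_rsum (fun i k => inner (z k i) (AT i c))).
  intros i Hi. apply (bounded_pseq_block_inner n); auto.
Qed.

Lemma lam_bounded :
  (forall k, 0 <= theta k <= 1) ->
  bounded_pseq n d z -> bounded_pseq n d z_step_subgrad ->
  bounded_pseq n d (fun k => grad_g d dg (y (S k))) ->
  (forall c : vec m, exists u : pvec d, Amap n m d A u = c) ->
  exists M, forall k, norm (lam k) <= M.
Proof.
  intros Hth Bz Bsub Bgrad Honto. apply bounded_vec_seq. intro c.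
  destruct (Honto c) as [u <-].
  apply (bounded_seq_ext _ (fun k => rsum (fun i => inner (AT i (lam k)) (u i)) n)).
  { intro k. rewrite inner_Amap. apply rsum_ext. intros i Hi.
    rewrite inner_comm, (HAT i Hi), inner_comm. reflexivity. }
  apply (bounded_seq_rsum (fun i k => inner (AT i (lam k)) (u i))). intros i Hi.
  apply (bounded_seq_ext _ _ (fun k => inner_AT_lam k i (u i))).
  assert (Btheta : bounded_seq theta) by (exists 1; intro k; apply Rabs_le; pose proof (Hth k); lra).
  apply bounded_seq_opp; repeat apply bounded_seq_plus.
  - apply (bounded_pseq_block_inner n); auto.
  - apply (bounded_pseq_block_inner n d (fun k => grad_g d dg (y (S k)))); auto.
  - apply bounded_seq_mult; [apply bounded_seq_const|].
    apply (bounded_seq_ext _ (fun k => inner (residual k) (A i (u i)))).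
    { intro k. rewrite inner_comm, <- (HAT i Hi), inner_comm. reflexivity. }
    apply residual_inner_bounded, Bz.
  - apply bounded_seq_mult; unfold prox_weight.
    + apply bounded_seq_plus; apply bounded_seq_mult; auto using bounded_seq_const.
    + apply bounded_seq_minus.
      * apply (bounded_pseq_block_inner n d (fun k => z (S k))); auto using bounded_pseq_shift.
      * apply (bounded_pseq_block_inner n); auto.
Qed.

End ZSubproblem.

Theorem theorem3
  (n m : nat) (d : nat -> nat)
  (g : forall i, vec (d i) -> R) (dg : forall i, vec (d i) -> vec (d i))
  (h : forall i, vec (d i) -> ERbar)
  (L : nat -> R)
  (A : forall i, vec (d i) -> vec m) (AT : forall i, vec m -> vec (d i))
  (b : vec m) (beta : R) (eta : nat -> R)
  (x y z : nat -> pvec d) (lam : nat -> vec m) (theta : nat -> R)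
  (* standing assumptions *)
  (Hg_conv : forall i, (i < n)%nat -> convex (g i))
  (Hg_grad : forall i, (i < n)%nat -> is_gradient (g i) (dg i))
  (HL : forall i, (i < n)%nat -> 0 < L i)
  (Hg_lip : forall i, (i < n)%nat -> lipschitz (dg i) (L i))
  (Hh_prop : forall i, (i < n)%nat -> proper (h i))
  (Hh_conv : forall i, (i < n)%nat -> convex_ext (h i))
  (Hh_lsc : forall i, (i < n)%nat -> lsc (h i))
  (HA_lin : forall i, (i < n)%nat -> linear_map (A i))
  (HA_nz : forall i, (i < n)%nat -> exists u, A i u <> vzero m)
  (HAT : forall i, (i < n)%nat -> is_adjoint (A i) (AT i))
  (Hbeta : 0 < beta)
  (Heta : forall i, (i < n)%nat ->
     exists nA, is_opnorm (A i) nA /\ INR n * nA ^ 2 < eta i)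
  (* the Fast PL-ADMM-PS iteration *)
  (Htheta0 : theta 0%nat = 1)
  (Htheta : forall k, theta (S k) =
     (- (theta k) ^ 2 + sqrt ((theta k) ^ 4 + 4 * (theta k) ^ 2)) / 2)
  (Hy : forall k i, (i < n)%nat ->
     y (S k) i = vadd (vscale (1 - theta k) (x k i)) (vscale (theta k) (z k i)))
  (Hz : forall k i, (i < n)%nat -> forall w : vec (d i),
     ext_le
       (ext_add (h i (z (S k) i))
          (fin (inner (dg i (y (S k) i)) (z (S k) i)
                + inner (lam k) (A i (z (S k) i))
                + inner (vscale beta (AT i (vsub (Amap n m d A (z k)) b))) (z (S k) i)
                + (L i * theta k + beta * eta i) / 2 * (norm (vsub (z (S k) i) (z k i))) ^ 2)))
       (ext_add (h i w)
          (fin (inner (dg i (y (S k) i)) w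
                + inner (lam k) (A i w)
                + inner (vscale beta (AT i (vsub (Amap n m d A (z k)) b))) w
                + (L i * theta k + beta * eta i) / 2 * (norm (vsub w (z k i))) ^ 2))))
  (Hx : forall k i, (i < n)%nat ->
     x (S k) i = vadd (vscale (1 - theta k) (x k i)) (vscale (theta k) (z (S k) i)))
  (Hlam : forall k,
     lam (S k) = vadd (lam k) (vscale beta (vsub (Amap n m d A (z (S k))) b)))
  (* assumptions of the theorem *)
  (Honto : forall c : vec m, exists u : pvec d, Amap n m d A u = c)
  (Hzb : exists M, forall k, pnorm n d (z k) <= M)
  (Hsub_bdd : forall B : pvec d -> Prop, pbounded_set n d B ->
     exists M, forall u v, B u -> subgrad_h n d h u v -> pnorm n d v <= M)
  (Hgrad_bdd : forall B : pvec d -> Prop, pbounded_set n d B ->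
     exists M, forall u, B u -> pnorm n d (grad_g d dg u) <= M) :
  (exists M, forall k, pnorm n d (x k) <= M) /\
  (exists M, forall k, pnorm n d (y k) <= M) /\
  (exists M, forall k, norm (lam k) <= M).
Proof.
  pose proof (theta_in_unit theta Htheta0 Htheta) as Hth.
  assert (Bz : bounded_pseq n d z) by (apply bounded_pseq_pnorm, Hzb).
  assert (Bx : bounded_pseq n d x).
  { apply (bounded_pseq_convex_iterates n d theta Hth x (fun k => z (S k)));
      auto using bounded_pseq_shift. }
  assert (By : bounded_pseq n d y).
  { apply (bounded_pseq_convex_comb n d theta Hth y x z); auto. }
  split; [apply bounded_pseq_pnorm, Bx|]. split; [apply bounded_pseq_pnorm, By|].
  apply (lam_bounded n m d dg L A AT b beta eta y z lam theta); auto.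
  - apply (bounded_pseq_image n d (subgrad_h n d h) (fun k => z (S k)));
      auto using bounded_pseq_shift.
    intro k. apply z_step_subgrad_spec; auto.
  - apply (bounded_pseq_image n d (fun u w => w = grad_g d dg u) (fun k => y (S k)));
      auto using bounded_pseq_shift.
    intros B HB. destruct (Hgrad_bdd B HB) as [M HM].
    exists M. intros u w Hu ->. auto.
Qed.
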